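(* Let $M'(t,y)$ be as in the context, and let $(Z^1_n)_{n\ge1}$ be càglàd predictable processes of bounded quadratic variation on $[0,T]$ converging a.s. to a càglàd predictable process $Z^1$ of bounded quadratic variation on $[0,T]$, with $\sup_{n\ge1}[Z^1_n,Z^1_n]_T<\infty$. Then $B^{Z^1_n}_T\to B^{Z^1}_T$ a.s., where for a càglàd process $Z$, $$B^{Z}_T=\sum_{0\le s<T}\tfrac12\big[M'(s,Z_{s+}-Z_s)-M'(s,0)\big](Z_{s+}-Z_s)^2 .$$
   Context: Fix $T>0$ and a filtered probability space $(\Omega,\mathcal F,(\mathcal F_t)_{t\in[0,T]},\mathbb P)$ satisfying the usual conditions. $A(t,y)$, $B(t,y)$ are ask and bid prices for an order of size $y$: adapted, non-negative, $C^2$ in $y$, with $A(\cdot,0),B(\cdot,0)$ non-negative locally bounded semimartingales and with first and second $y$-derivatives càdlàg and locally bounded in $t$. $M(t,y)=\tfrac12(A(t,y)+B(t,y))$ and $M'=\partial M/\partial y$. Quadratic variation $[Z,Z]_t$ is the pathwise limit of $\sum_{i\ge1}|Z_{\tau^n_i}-Z_{\tau^n_{i-1}}|^2$ along every sequence of stopping-time partitions of $[0,t]$ tending to the identity; bounded quadratic variation means this limit exists and is finite a.s. *)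

From mathcomp Require Import all_boot all_order all_algebra.
From mathcomp Require Import all_classical all_reals all_analysis.

Set Implicit Arguments.
Unset Strict Implicit.
Unset Printing Implicit Defensive.
Import Order.TTheory GRing.Theory Num.Theory.
Import numFieldNormedType.Exports.
Local Open Scope classical_set_scope.
Local Open Scope ring_scope.

Section defs.
Context {R : realType} {d : measure_display} {Omega : measurableType d}.

(* A process on [0,T] is a map (t, w) |-> X t w; filtrations are R-indexed
   families of set systems on Omega, only their restriction to [0,T] matters. *)

Definition filtration (F : R -> set (set Omega)) (T : R) :=
  (forall t, 0 <= t <= T -> sigma_algebra setT (F t) /\ F t `<=` measurable) /\
  (forall s t, 0 <= s -> s <= t -> t <= T -> F s `<=` F t).

Definition usual_conditions (P : probability Omega R)
    (F : R -> set (set Omega)) (T : R) :=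
  filtration F T /\
  (forall t, 0 <= t < T -> forall A, (forall u, t < u <= T -> F u A) -> F t A) /\
  (forall N, measurable N -> P N = 0%E -> forall A, A `<=` N -> F 0 A).

Definition adapted (F : R -> set (set Omega)) (T : R) (X : R -> Omega -> R) :=
  forall t, 0 <= t <= T -> forall B : set R, measurable B -> F t (X t @^-1` B).

Definition stopping_time (F : R -> set (set Omega)) (T : R) (tau : Omega -> R) :=
  (forall w, 0 <= tau w) /\
  (forall t, 0 <= t <= T -> F t [set w | tau w <= t]).

Definition localizing (P : probability Omega R) (F : R -> set (set Omega))
    (T : R) (tau : nat -> Omega -> R) :=
  (forall k, stopping_time F T (tau k)) /\
  (forall k w, tau k w <= tau k.+1 w) /\
  {ae P, forall w, forall C : R, exists k, C <= tau k w}.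

Definition stopped (X : R -> Omega -> R) (tau : Omega -> R) : R -> Omega -> R :=
  fun t w => X (Num.min t (tau w)) w.

Definition cadlag_on (T : R) (f : R -> R) :=
  (forall t, 0 <= t < T -> f @ t^'+ --> f t) /\
  (forall t, 0 < t <= T -> cvg (f @ t^'-)).

Definition caglad_on (T : R) (f : R -> R) :=
  (forall t, 0 < t <= T -> f @ t^'- --> f t) /\
  (forall t, 0 <= t < T -> cvg (f @ t^'+)).

(** martingale on [0,T] (conditional expectations expressed through their
    defining property) *)
Definition martingale (P : probability Omega R) (F : R -> set (set Omega))
    (T : R) (X : R -> Omega -> R) :=
  adapted F T X /\
  (forall t, 0 <= t <= T -> P.-integrable setT (fun w => (X t w)%:E)) /\
  (forall s t, 0 <= s -> s <= t -> t <= T -> forall A, F s A ->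
     (\int[P]_(w in A) (X t w)%:E = \int[P]_(w in A) (X s w)%:E)%E).

Definition local_martingale (P : probability Omega R) (F : R -> set (set Omega))
    (T : R) (X : R -> Omega -> R) :=
  (forall w, cadlag_on T (X^~ w)) /\
  exists tau, localizing P F T tau /\ forall k, martingale P F T (stopped X (tau k)).

Definition semimartingale (P : probability Omega R) (F : R -> set (set Omega))
    (T : R) (X : R -> Omega -> R) :=
  adapted F T X /\ (forall w, cadlag_on T (X^~ w)) /\
  exists Mg V : R -> Omega -> R,
    local_martingale P F T Mg /\ (forall w, Mg 0 w = 0) /\
    adapted F T V /\ (forall w, cadlag_on T (V^~ w)) /\ (forall w, V 0 w = 0) /\
    (forall w, bounded_variation 0 T (V^~ w)) /\
    (forall t w, 0 <= t <= T -> X t w = X 0 w + Mg t w + V t w).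

Definition locally_bounded (P : probability Omega R) (F : R -> set (set Omega))
    (T : R) (X : R -> Omega -> R) :=
  exists tau, localizing P F T tau /\
  exists C : nat -> R, forall k t w, 0 <= t <= T -> 0 < tau k w ->
    `|stopped X (tau k) t w| <= C k.

Definition D1 (A : R -> R -> Omega -> R) : R -> R -> Omega -> R :=
  fun t y w => derive1 (fun z => A t z w) y.
Definition D2 (A : R -> R -> Omega -> R) : R -> R -> Omega -> R :=
  fun t y w => derive1 (derive1 (fun z => A t z w)) y.

Definition locally_bounded_in_t (P : probability Omega R)
    (F : R -> set (set Omega)) (T : R) (G : R -> R -> Omega -> R) :=
  forall r : R, 0 < r -> exists tau, localizing P F T tau /\
  exists C : nat -> R, forall k t y w, 0 <= t <= T -> `|y| <= r -> 0 < tau k w ->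
    `|G (Num.min t (tau k w)) y w| <= C k.

(** standing assumptions on an ask (or bid) price surface *)
Definition price_surface (P : probability Omega R) (F : R -> set (set Omega))
    (T : R) (A : R -> R -> Omega -> R) :=
  (forall y, adapted F T (fun t => A t y)) /\
  (forall t y w, 0 <= A t y w) /\
  (forall t w, 0 <= t <= T ->
     (forall y, derivable (fun z => A t z w) y 1) /\
     (forall y, derivable (derive1 (fun z => A t z w)) y 1) /\
     continuous (derive1 (derive1 (fun z => A t z w)))) /\
  semimartingale P F T (fun t => A t 0) /\
  locally_bounded P F T (fun t => A t 0) /\
  (forall y w, cadlag_on T (fun t => D1 A t y w)) /\
  (forall y w, cadlag_on T (fun t => D2 A t y w)) /\
  locally_bounded_in_t P F T (D1 A) /\
  locally_bounded_in_t P F T (D2 A).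

Definition Mp (A B : R -> R -> Omega -> R) : R -> R -> Omega -> R :=
  fun t y w => derive1 (fun z => (A t z w + B t z w) / 2) y.

Definition pred_rectangles (F : R -> set (set Omega)) (T : R) : set (set (R * Omega)) :=
  [set E | (exists A, F 0 A /\ E = [set 0] `*` A) \/
           (exists s u A, [/\ 0 <= s, s < u, u <= T, F s A &
                              E = `]s, u] `*` A])].

Definition predictable (F : R -> set (set Omega)) (T : R) (X : R -> Omega -> R) :=
  measurable_fun (`[0, T] `*` setT : set (g_sigma_algebraType (pred_rectangles F T)))
    ((fun p : R * Omega => X p.1 p.2) : g_sigma_algebraType (pred_rectangles F T) -> R).

Definition st_partition (F : R -> set (set Omega)) (T t : R) (tau : nat -> Omega -> R) :=
  (forall i, stopping_time F T (tau i)) /\ (forall w, tau 0%N w = 0) /\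
  (forall i w, tau i w <= tau i.+1 w) /\ (forall i w, tau i w <= t) /\
  (forall w, exists i, tau i w = t).

Definition partitions_to_id (P : probability Omega R) (F : R -> set (set Omega))
    (T t : R) (tau : nat -> nat -> Omega -> R) :=
  (forall n, st_partition F T t (tau n)) /\
  {ae P, forall w, forall e : R, 0 < e ->
     \forall n \near \oo, forall i, tau n i.+1 w - tau n i w <= e}.

(** sum_{i >= 1} |Z_{tau_i} - Z_{tau_{i-1}}|^2 (finitely many non-zero terms) *)
Definition qv_sum (Z : R -> Omega -> R) (tau : nat -> Omega -> R) (w : Omega) : R :=
  lim ((fun m => \sum_(i < m) (Z (tau i.+1 w) w - Z (tau i w) w) ^+ 2) @ \oo).

Definition is_qv (P : probability Omega R) (F : R -> set (set Omega)) (T : R)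
    (Z Q : R -> Omega -> R) :=
  forall t, 0 <= t <= T -> forall tau, partitions_to_id P F T t tau ->
    {ae P, forall w, (fun n => qv_sum Z (tau n) w) @ \oo --> Q t w}.

Definition bounded_qv (P : probability Omega R) (F : R -> set (set Omega)) (T : R)
    (Z : R -> Omega -> R) := exists Q, is_qv P F T Z Q.

Definition caglad_predictable (F : R -> set (set Omega)) (T : R) (Z : R -> Omega -> R) :=
  (forall w, caglad_on T (Z^~ w)) /\ predictable F T Z.

End defs.

(** unordered sum over a (possibly uncountable) set of real numbers:
    (sum of positive parts) - (sum of negative parts); equals the usual sum
    for absolutely summable families *)
Definition sumR {R : realType} (S : set R) (g : R -> R) : R :=
  fine (\esum_(s in S) (Num.max (g s) 0)%:E) - fine (\esum_(s in S) (Num.max (- g s) 0)%:E).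

Definition rjump {R : realType} (f : R -> R) (s : R) : R := lim (f @ s^'+) - f s.

Definition BZ {R : realType} {d : measure_display} {Omega : measurableType d}
    (A B : R -> R -> Omega -> R) (T : R) (Z : R -> Omega -> R) (w : Omega) : R :=
  sumR [set s | 0 <= s < T]
    (fun s => 2^-1 * (Mp A B s (rjump (Z^~ w) s) w - Mp A B s 0 w) * (rjump (Z^~ w) s) ^+ 2).

From mathcomp Require Import all_boot all_order all_algebra.
From mathcomp Require Import all_classical all_reals all_analysis.
From mathcomp Require Import ring lra.
Import Order.TTheory GRing.Theory Num.Theory.
Import numFieldNormedType.Exports.
Local Open Scope classical_set_scope.
Local Open Scope ring_scope.

(* Fix a path w outside a null set and write g_s(y) := (M'(s,y) - M'(s,0)) y^2 / 2,
   so that B^Z_T is the unordered sum over s in [0,T) of g_s(Z_{s+} - Z_s).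
   - Along the deterministic uniform partitions of [0,T] (which are stopping-time
     partitions tending to the identity), every right jump of a caglad path is
     eventually the increment over a single cell, and distinct jumps lie in
     distinct cells; hence finitely many squared jumps of Z_n sum to at most
     [Z_n,Z_n]_T <= C, and in the limit the same holds for Z.  In particular all
     jumps are bounded by some r with r^2 >= C.
   - The second y-derivatives of A and B are bounded on [0,T] x [-r,r], so M'(s,.)
     is K-Lipschitz on [-r,r] uniformly in s, and then
     |g_s(y) - g_s(y')| <= 2 K |y - y'| (y^2 + y'^2).
   - Uniform convergence of Z_n gives uniform convergence of their right jumps,
     so the unordered sums differ by at most 8 K C sup_s |jump difference| -> 0. *)

Lemma near_all_in_seq {I : eqType} {U} (F : set_system U) {FF : Filter F}
    (s : seq I) (P : I -> U -> Prop) :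
  (forall x, x \in s -> \forall m \near F, P x m) ->
  \forall m \near F, forall x, x \in s -> P x m.
Proof.
elim: s => [|a s IH] Ps; first by apply: nearW => m x; rewrite in_nil.
have Pa := Ps a (mem_head a s).
have {}IH : \forall m \near F, forall x, x \in s -> P x m.
  by apply: IH => x xs; apply: Ps; rewrite inE xs orbT.
by apply: filterS2 Pa IH => m Pa Ps' x; rewrite inE => /predU1P[->|/Ps'].
Qed.

Section preliminaries.
Context {R : realType}.

Lemma subrACA (a b c d : R) : a - b - (c - d) = a - c - (b - d).
Proof. by ring. Qed.

Lemma ler_sum_uniq_ord (F : nat -> R) (r : seq nat) n :
  (forall i, 0 <= F i) -> uniq r -> (forall i, i \in r -> (i < n)%N) ->
  \sum_(i <- r) F i <= \sum_(i < n) F i.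
Proof.
move=> F0 ur rn.
rewrite -(big_mkord xpredT F) [leRHS](bigID (mem r)) /= -[leLHS]addr0.
apply: lerD; last by apply: sumr_ge0.
rewrite le_eqVlt -[X in _ == X]big_filter; apply/orP; left; apply/eqP/perm_big.
apply: uniq_perm => //; first exact: filter_uniq (iota_uniq _ _).
by move=> i; rewrite mem_filter mem_index_iota; case: (boolP (i \in r)) => // /rn.
Qed.

Lemma cvg_seq_within {u : nat -> R} {D : set R} {x : R} :
  u @ \oo --> x -> (forall m, D (u m)) -> u @ \oo --> within D (nbhs x).
Proof.
move=> ux Du A /ux; rewrite !nbhs_filterE.
by apply: (@filterS _ \oo) => m /(_ (Du m)).
Qed.

Lemma cvg_sum_seq (s : seq R) (a : R -> nat -> R) (l : R -> R) :
  (forall x, x \in s -> a x @ \oo --> l x) ->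
  (fun m => \sum_(x <- s) a x m) @ \oo --> \sum_(x <- s) l x.
Proof.
move=> al; rewrite big_seq_cond; under eq_fun do rewrite big_seq_cond.
apply: cvg_big; first exact: add_continuous.
by move=> x /andP[+ _]; apply: al.
Qed.
End preliminaries.

Section finite_sums.
Context {R : realType}.
Implicit Types (S : set R) (f g : R -> R).

Definition finsums_le S f (c : R) := forall s : seq R,
  uniq s -> (forall x, x \in s -> S x) -> \sum_(x <- s) f x <= c.

Lemma le_finsums {S f g c} :
  (forall x, f x <= g x) -> finsums_le S g c -> finsums_le S f c.
Proof.
by move=> fg Hg s us sS; apply: le_trans (Hg s us sS); apply: ler_sum => x _.
Qed.

Lemma fsets_big_seq {S X : set R} : fsets S X -> exists s : seq R,
  [/\ uniq s, (forall x, x \in s -> S x) &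
      forall f, (\sum_(x \in X) (f x)%:E = (\sum_(x <- s) f x)%:E)%E].
Proof.
move=> [finX XS]; exists (finmap.enum_fset (fset_set X)); split.
- exact: finmap.fset_uniq.
- by move=> x; rewrite in_fset_set// inE => /XS.
- by move=> f; rewrite fsumEFin// fsbig_finite.
Qed.

Lemma esum_le_finsums {S : set R} {f : R -> R} {c : R} :
  finsums_le S f c -> (\esum_(x in S) (f x)%:E <= c%:E)%E.
Proof.
move=> Hf; apply: ge_ereal_sup => _ [X /fsets_big_seq [s [us sS ->]] <-].
by rewrite lee_fin; apply: Hf.
Qed.

Lemma esum_le_fine_addr {S : set R} {f g : R -> R} {del : R} :
  \esum_(x in S) (g x)%:E \is a fin_num ->
  finsums_le S (fun x => `|f x - g x|) del ->
  (\esum_(x in S) (f x)%:E <= (fine (\esum_(x in S) (g x)%:E) + del)%:E)%E.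
Proof.
move=> fing Hd; apply: ge_ereal_sup => _ [X hX <-].
have [s [us sS E]] := fsets_big_seq hX.
have : (\sum_(x \in X) (g x)%:E <= \esum_(x in S) (g x)%:E)%E.
  by apply: ereal_sup_ubound; exists X.
rewrite -(fineK fing) !E !lee_fin => le_g.
apply: le_trans (lerD le_g (Hd s us sS)); rewrite -big_split /=.
by apply: ler_sum => x _; rewrite -lerBlDl (le_trans (ler_norm _)).
Qed.

Lemma dist_fine_esum_le {S f g} {cf cg del : R} :
  (forall x, 0 <= f x) -> (forall x, 0 <= g x) ->
  finsums_le S f cf -> finsums_le S g cg ->
  finsums_le S (fun x => `|f x - g x|) del ->
  `|fine (\esum_(x in S) (f x)%:E) - fine (\esum_(x in S) (g x)%:E)| <= del.
Proof.
move=> f0 g0 Hf Hg Hd.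
have fin_esum h ch : (forall x, 0 <= h x) -> finsums_le S h ch ->
    \esum_(x in S) (h x)%:E \is a fin_num.
  move=> h0 Hh; have e0 : (0 <= \esum_(x in S) (h x)%:E)%E.
    by apply: esum_ge0 => x _; rewrite lee_fin.
  by rewrite ge0_fin_numE // (le_lt_trans (esum_le_finsums Hh)) ?ltry.
have finf := fin_esum f cf f0 Hf; have fing := fin_esum g cg g0 Hg.
have Hd' : finsums_le S (fun x => `|g x - f x|) del.
  by apply: le_finsums Hd => x; rewrite distrC.
have := esum_le_fine_addr fing Hd; rewrite -[in X in (X <= _)%E](fineK finf).
have := esum_le_fine_addr finf Hd'; rewrite -[in X in (X <= _)%E](fineK fing).
rewrite !lee_fin ler_norml => ? ?; apply/andP; split; lra.
Qed.

Lemma dist_max0_le (x y : R) : `|Num.max x 0 - Num.max y 0| <= `|x - y|.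
Proof.
have [hx|hx] := leP x 0; have [hy|hy] := leP y 0; rewrite ?subrr ?normr0 //.
- rewrite sub0r normrN gtr0_norm // ler_normr; apply/orP; right; lra.
- rewrite subr0 gtr0_norm // ler_normr; apply/orP; left; lra.
Qed.

Lemma dist_fine_esum_pos_le {S f g} {cf cg del : R} :
  finsums_le S (fun x => `|f x|) cf -> finsums_le S (fun x => `|g x|) cg ->
  finsums_le S (fun x => `|f x - g x|) del ->
  `|fine (\esum_(x in S) (Num.max (f x) 0)%:E) -
    fine (\esum_(x in S) (Num.max (g x) 0)%:E)| <= del.
Proof.
have pos_ge0 (x : R) : 0 <= Num.max x 0 by rewrite le_max lexx orbT.
have pos_le_norm (x : R) : Num.max x 0 <= `|x| by rewrite ge_max normr_ge0 ler_norm.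
move=> Hf Hg Hd; apply: (dist_fine_esum_le (cf := cf) (cg := cg)) => //.
- by apply: le_finsums Hf => x; apply: pos_le_norm.
- by apply: le_finsums Hg => x; apply: pos_le_norm.
- by apply: le_finsums Hd => x; apply: dist_max0_le.
Qed.

Lemma dist_sumR_le {S f g} {cf cg del : R} :
  finsums_le S (fun x => `|f x|) cf -> finsums_le S (fun x => `|g x|) cg ->
  finsums_le S (fun x => `|f x - g x|) del ->
  `|sumR S f - sumR S g| <= del *+ 2.
Proof.
move=> Hf Hg Hd; rewrite /sumR mulr2n subrACA.
apply: le_trans (ler_normB _ _) (lerD (dist_fine_esum_pos_le Hf Hg Hd) _).
apply: dist_fine_esum_pos_le.
- by apply: le_finsums Hf => x; rewrite normrN.
- by apply: le_finsums Hg => x; rewrite normrN.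
- by apply: le_finsums Hd => x; rewrite -opprD normrN.
Qed.
End finite_sums.

Section jump_cost.
Context {R : realType}.

Lemma lipschitz_ball_le {phi : R -> R} {K r u v : R} :
  K.-lipschitz_[set z | `|z| <= r] phi -> `|u| <= r -> `|v| <= r ->
  `|phi u - phi v| <= K * `|u - v|.
Proof. by move=> lip hu hv; apply: (lip (u, v)). Qed.

Definition jump_cost (phi : R -> R) (y : R) : R := 2^-1 * (phi y - phi 0) * y ^+ 2.

Lemma jump_cost_lipschitz {phi : R -> R} {K r y y' : R} : 0 <= K ->
  K.-lipschitz_[set z | `|z| <= r] phi -> `|y| <= r -> `|y'| <= r ->
  `|jump_cost phi y - jump_cost phi y'| <=
    2 * K * `|y - y'| * (y ^+ 2 + y' ^+ 2).
Proof.
move=> K0 lip hy hy'.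
have r0 : 0 <= r := le_trans (normr_ge0 _) hy.
have h1 := lipschitz_ball_le lip hy hy'.
have := lipschitz_ball_le (v := 0) lip hy'; rewrite normr0 subr0 => /(_ r0) h2.
have -> : jump_cost phi y - jump_cost phi y' = 2^-1 *
    ((phi y - phi y') * y ^+ 2 + (phi y' - phi 0) * (y - y') * (y + y')).
  by rewrite /jump_cost; ring.
rewrite normrM ger0_norm ?invr_ge0 ?ler0n //.
apply: le_trans (ler_wpM2l _ (ler_normD _ _)) _; first by rewrite invr_ge0 ler0n.
rewrite !normrM -(real_normK (num_real y)) -(real_normK (num_real y')).
have Kd0 : 0 <= K * `|y - y'| by rewrite mulr_ge0.
have t1 : `|phi y - phi y'| * (`|y| * `|y|) <= K * `|y - y'| * (`|y| * `|y|).
  by rewrite ler_wpM2r ?mulr_ge0.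
have t2 : `|phi y' - phi 0| * `|y - y'| * `|y + y'| <=
    K * `|y - y'| * (`|y'| * (`|y| + `|y'|)).
  rewrite [_ * (_ * _)]mulrCA mulrA ler_pM ?mulr_ge0 ?ler_normD //.
  by rewrite mulrA [_ * K]mulrC ler_wpM2r.
have t3 : K * `|y - y'| * (`|y'| * (`|y| + `|y'|)) <=
    K * `|y - y'| * (2 * (`|y| ^+ 2 + `|y'| ^+ 2)).
  by apply: ler_wpM2l => //; have := normr_ge0 y; have := normr_ge0 y'; nra.
have : 0 <= K * `|y - y'| * `|y| ^+ 2 by rewrite mulr_ge0 ?sqr_ge0.
have : 0 <= K * `|y - y'| * `|y'| ^+ 2 by rewrite mulr_ge0 ?sqr_ge0.
rewrite -expr2 in t1; lra.
Qed.

Lemma jump_cost_bound {phi : R -> R} {K r y : R} : 0 <= K ->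
  K.-lipschitz_[set z | `|z| <= r] phi -> `|y| <= r ->
  `|jump_cost phi y| <= 2 * K * r * y ^+ 2.
Proof.
move=> K0 lip hy; have r0 : 0 <= r := le_trans (normr_ge0 _) hy.
have := jump_cost_lipschitz (y' := 0) K0 lip hy; rewrite normr0 => /(_ r0).
rewrite /jump_cost [in X in `|_ - X|]expr0n /= mulr0 subr0 subr0 expr0n addr0.
move/le_trans; apply; rewrite -!mulrA ler_wpM2l ?mulr_ge0 ?ler0n //.
by rewrite ler_wpM2l // ler_wpM2r ?sqr_ge0.
Qed.
End jump_cost.

Section sumR_jump_cost.
Context {R : realType}.
Implicit Types (S : set R).

Lemma finsums_le_lim {S} {fn : nat -> R -> R} {f : R -> R} {c : R} :
  (forall x, S x -> fn ^~ x @ \oo --> f x) ->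
  (forall n, finsums_le S (fn n) c) -> finsums_le S f c.
Proof.
move=> fnf Hfn s us sS.
have := @cvg_sum_seq _ s (fun x n => fn n x) f (fun x xs => fnf x (sS x xs)).
move/ler_cvg_to; apply; first exact: cvg_cst.
by apply: nearW => n; apply: Hfn.
Qed.

Lemma finsums_sqr_norm_le {S} {f : R -> R} {C r x : R} : 0 <= r ->
  C <= r ^+ 2 -> finsums_le S (fun y => f y ^+ 2) C -> S x -> `|f x| <= r.
Proof.
move=> r0 Cr Hf Sx.
have : f x ^+ 2 <= C.
  by have := Hf [:: x] isT; rewrite big_seq1; apply=> y /[!inE] /eqP->.
rewrite -(real_normK (num_real (f x))) => fC.
have := normr_ge0 (f x); nra.
Qed.

Lemma finsums_jump_cost_le {S} {phi : R -> R -> R} {f : R -> R} {C r K : R} :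
  0 <= K -> 0 <= r ->
  (forall x, S x -> K.-lipschitz_[set y | `|y| <= r] (phi x)) ->
  (forall x, S x -> `|f x| <= r) -> finsums_le S (fun x => f x ^+ 2) C ->
  finsums_le S (fun x => `|jump_cost (phi x) (f x)|) (2 * K * r * C).
Proof.
move=> K0 r0 lip fr Hf s us sS.
apply: le_trans (ler_wpM2l _ (Hf s us sS)); last by rewrite !mulr_ge0.
rewrite mulr_sumr big_seq [leRHS]big_seq; apply: ler_sum => x /sS Sx.
exact: jump_cost_bound (lip x Sx) (fr x Sx).
Qed.

Lemma finsums_dist_jump_cost_le {S} {phi : R -> R -> R} {f g : R -> R}
    {C r K del : R} : 0 <= K -> 0 <= del ->
  (forall x, S x -> K.-lipschitz_[set y | `|y| <= r] (phi x)) ->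
  (forall x, S x -> `|f x| <= r) -> (forall x, S x -> `|g x| <= r) ->
  (forall x, S x -> `|f x - g x| <= del) ->
  finsums_le S (fun x => f x ^+ 2) C -> finsums_le S (fun x => g x ^+ 2) C ->
  finsums_le S (fun x => `|jump_cost (phi x) (f x) - jump_cost (phi x) (g x)|)
    (2 * K * del * (C + C)).
Proof.
move=> K0 del0 lip fr gr fg Hf Hg s us sS.
apply: le_trans (_ : \sum_(x <- s) 2 * K * del * (f x ^+ 2 + g x ^+ 2) <= _).
  rewrite big_seq [leRHS]big_seq; apply: ler_sum => x /sS Sx.
  apply: le_trans (jump_cost_lipschitz K0 (lip x Sx) (fr x Sx) (gr x Sx)) _.
  by rewrite ler_wpM2r ?addr_ge0 ?sqr_ge0 // ler_wpM2l ?mulr_ge0 ?fg.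
by rewrite -mulr_sumr big_split /= ler_wpM2l ?lerD ?Hf ?Hg // !mulr_ge0.
Qed.

Lemma cvg_sumR_jump_cost {S} {phi : R -> R -> R} {jn : nat -> R -> R}
    {j : R -> R} {C r K : R} :
  0 <= K -> 0 <= r -> C <= r ^+ 2 ->
  (forall x, S x -> K.-lipschitz_[set y | `|y| <= r] (phi x)) ->
  (forall n, finsums_le S (fun x => jn n x ^+ 2) C) ->
  (forall e, 0 < e -> \forall n \near \oo, forall x, S x -> `|jn n x - j x| <= e) ->
  (fun n => sumR S (fun x => jump_cost (phi x) (jn n x))) @ \oo -->
    sumR S (fun x => jump_cost (phi x) (j x)).
Proof.
move=> K0 r0 Cr lip Hjn jn_unif.
have jn_cvg x : S x -> jn ^~ x @ \oo --> j x.
  move=> Sx; apply/cvgrPdist_le => e /jn_unif; apply: filterS => n /(_ x Sx).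
  by rewrite distrC.
have Hj : finsums_le S (fun x => j x ^+ 2) C.
  apply: (finsums_le_lim (fn := fun n x => jn n x ^+ 2)) Hjn => x Sx.
  by rewrite expr2; under eq_fun do rewrite expr2; apply: cvgM; apply: jn_cvg.
have C0 : 0 <= C by have := Hj [::] isT; rewrite big_nil; apply=> x; rewrite in_nil.
have jn_le n x : S x -> `|jn n x| <= r := finsums_sqr_norm_le (x := x) r0 Cr (Hjn n).
have j_le x : S x -> `|j x| <= r := finsums_sqr_norm_le (x := x) r0 Cr Hj.
apply/cvgrPdist_le => eps eps0.
pose D := 8 * K * C + 1.
have D0 : 0 < D by rewrite ltr_wpDl // !mulr_ge0.
near=> n.
have jn_near : forall x, S x -> `|jn n x - j x| <= eps / D.
  by near: n; apply: jn_unif; rewrite divr_gt0.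
have eD0 : 0 <= eps / D by rewrite divr_ge0 // ltW.
apply: le_trans (dist_sumR_le
  (finsums_jump_cost_le K0 r0 lip j_le Hj)
  (finsums_jump_cost_le K0 r0 lip (jn_le n) (Hjn n))
  (finsums_dist_jump_cost_le K0 eD0 lip j_le (jn_le n) _ Hj (Hjn n))) _.
  by move=> x Sx; rewrite distrC jn_near.
have -> : (2 * K * (eps / D) * (C + C)) *+ 2 = eps * (8 * K * C / D).
  by rewrite /D; field; rewrite lt0r_neq0.
by rewrite ger_pMr // ler_pdivrMr // mul1r lerDl.
Unshelve. all: by end_near.
Qed.
End sumR_jump_cost.

Section uniform_partition.
Context {R : realType}.
Variable T : R.
Hypothesis T_gt0 : 0 < T.

Definition unif_mesh (m : nat) : R := T / m.+1%:R.

Definition unif_part (m i : nat) : R := Num.min (i%:R * unif_mesh m) T.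

Definition unif_cell (m : nat) (x : R) : nat := Num.truncn (x / unif_mesh m).

Lemma unif_mesh_gt0 m : 0 < unif_mesh m. Proof. by rewrite divr_gt0. Qed.

Lemma unif_part0 m : unif_part m 0 = 0.
Proof. by rewrite /unif_part mul0r; apply/min_idPl/ltW. Qed.

Lemma unif_part_ge0 m i : 0 <= unif_part m i.
Proof.
by rewrite /unif_part le_min mulr_ge0 ?ler0n ?(ltW (unif_mesh_gt0 m)) ?(ltW T_gt0).
Qed.

Lemma unif_part_le m i : unif_part m i <= T.
Proof. by rewrite /unif_part ge_min lexx orbT. Qed.

Lemma unif_part_le_succ m i : unif_part m i <= unif_part m i.+1.
Proof.
rewrite /unif_part le_min !ge_min lexx orbT andbT ler_wpM2r ?ler_nat //.
exact/ltW/unif_mesh_gt0.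
Qed.

Lemma unif_part_end m i : (m.+1 <= i)%N -> unif_part m i = T.
Proof.
move=> mi; apply/min_idPr.
rewrite mulrA ler_pdivlMr ?ltr0n // mulrC ler_wpM2r ?ler_nat //; exact: ltW.
Qed.

Lemma unif_part_mesh m i : unif_part m i.+1 - unif_part m i <= unif_mesh m.
Proof.
rewrite /unif_part -addn1 natrD mulrDl mul1r lerBlDl.
have [iT|iT] := leP (i%:R * unif_mesh m) T; first by rewrite ge_min lexx.
by rewrite ge_min lerDl (ltW (unif_mesh_gt0 m)) orbT.
Qed.

Lemma unif_mesh_cvg0 : unif_mesh @ \oo --> 0.
Proof.
by have := cvgM (cvg_cst T) (@cvg_harmonic R); rewrite mulr0; apply.
Qed.

Lemma unif_cell_itv m x : 0 <= x < T ->
  [/\ (unif_cell m x < m.+1)%N, unif_part m (unif_cell m x) <= x &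
      x < unif_part m (unif_cell m x).+1].
Proof.
move=> /andP[x0 xT]; rewrite /unif_part /unif_cell.
have h0 := unif_mesh_gt0 m.
have xh0 := divr_ge0 x0 (ltW h0).
have /andP[k1 k2] := truncn_itv xh0.
have hm : m.+1%:R * unif_mesh m = T by rewrite /unif_mesh mulrCA divff ?mulr1.
split.
- by rewrite truncn_lt_nat // ltr_pdivrMr // hm.
- by rewrite /Num.min ge_min -ler_pdivlMr ?k1.
- by rewrite lt_min -ltr_pdivrMr ?k2.
Qed.

Lemma qv_sum_unif_part {d} {Omega : measurableType d}
    (Z : R -> Omega -> R) m w :
  qv_sum Z (fun i _ => unif_part m i) w =
  \sum_(i < m.+1) (Z (unif_part m i.+1) w - Z (unif_part m i) w) ^+ 2.
Proof.
apply: lim_near_cst => //; near=> N.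
have mN : (m.+1 <= N)%N by near: N; exists m.+1.
rewrite -(big_mkord xpredT
  (fun i => (Z (unif_part m i.+1) w - Z (unif_part m i) w) ^+ 2)).
rewrite (big_cat_nat (leq0n m.+1) mN) /= big_mkord.
rewrite [X in _ + X]big_nat_cond [X in _ + X]big1 ?addr0 //.
move=> i /andP[/andP[mi _] _].
by rewrite !unif_part_end ?subrr ?expr0n // ltnW.
Unshelve. all: by end_near.
Qed.

Lemma unif_cell_neq {x y} : 0 <= x < T -> 0 <= y < T -> x != y ->
  \forall m \near \oo, unif_cell m x != unif_cell m y.
Proof.
move=> xT yT xy.
have : \forall m \near \oo, unif_mesh m < `|x - y|.
  by apply: (cvgr_lt 0 unif_mesh_cvg0); rewrite normr_gt0 subr_eq0.
apply: filterS => m mesh_lt; apply/eqP => same_cell.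
have [_ x1 x2] := unif_cell_itv m x xT; have [_ y1 y2] := unif_cell_itv m y yT.
rewrite same_cell in x1 x2.
have := unif_part_mesh m (unif_cell m y).
by move: mesh_lt; rewrite ltr_normr => /orP[]; lra.
Qed.

Lemma unif_cell_cvg x : 0 <= x < T ->
  (fun m => unif_part m (unif_cell m x)) @ \oo --> x /\
  (fun m => unif_part m (unif_cell m x).+1) @ \oo --> x.
Proof.
move=> xT.
have squeeze (u : nat -> R) :
    (forall m, x - unif_mesh m <= u m <= x + unif_mesh m) -> u @ \oo --> x.
  move=> xu; apply: (squeeze_cvgr (f := fun m => x - unif_mesh m)
    (h := fun m => x + unif_mesh m)); first exact: nearW.
  - rewrite -[X in _ --> X]subr0.
    by apply: cvgB; [exact: cvg_cst|exact: unif_mesh_cvg0].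
  - rewrite -[X in _ --> X]addr0.
    by apply: cvgD; [exact: cvg_cst|exact: unif_mesh_cvg0].
split; apply: squeeze => m; have [_ lo hi] := unif_cell_itv m x xT;
  have := unif_part_mesh m (unif_cell m x); have := unif_mesh_gt0 m;
  move=> *; apply/andP; split; lra.
Qed.

Lemma cvg_unif_cell_increment (f : R -> R) x : caglad_on T f -> 0 <= x < T ->
  (fun m => f (unif_part m (unif_cell m x).+1) - f (unif_part m (unif_cell m x)))
    @ \oo --> rjump f x.
Proof.
move=> [f_left f_right] /[dup] xT /andP[x0 xT'].
have [lo_cvg hi_cvg] := unif_cell_cvg x xT.
apply: cvgB.
  apply: (cvg_at_rightP f x _).1; first exact: f_right.
  by split => // m; have [] := unif_cell_itv m x xT.
have [->|x_neq0] := eqVneq x 0.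
  under eq_fun do rewrite /unif_cell mul0r truncn0 unif_part0.
  exact: cvg_cst.
have lo_le m : unif_part m (unif_cell m x) <= x by have [] := unif_cell_itv m x xT.
apply: cvg_comp (cvg_seq_within lo_cvg lo_le) _.
by apply/cvg_at_left_within/f_left; rewrite lt0r x_neq0 x0 ltW.
Qed.

Lemma finsums_sqr_rjump_le {f : R -> R} {Q : R} : caglad_on T f ->
  (fun m => \sum_(i < m.+1) (f (unif_part m i.+1) - f (unif_part m i)) ^+ 2)
    @ \oo --> Q ->
  finsums_le [set x | 0 <= x < T] (fun x => rjump f x ^+ 2) Q.
Proof.
move=> cf qv s us sT.
pose incr m i := (f (unif_part m i.+1) - f (unif_part m i)) ^+ 2.
have incr_cvg x : x \in s ->
    (fun m => incr m (unif_cell m x)) @ \oo --> rjump f x ^+ 2.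
  move=> xs; rewrite /incr expr2; under eq_fun do rewrite expr2.
  by apply: cvgM; apply: cvg_unif_cell_increment => //; apply: sT.
apply: (ler_cvg_to (cvg_sum_seq s (fun x m => incr m (unif_cell m x)) _ incr_cvg)
  qv).
have : \forall m \near \oo, forall x, x \in s -> forall y, y \in s ->
    x != y -> unif_cell m x != unif_cell m y.
  apply: near_all_in_seq => x xs; apply: near_all_in_seq => y ys.
  have [->|xy] := eqVneq x y; first exact: nearW.
  by apply: filterS (unif_cell_neq (sT x xs) (sT y ys) xy) => m ?.
apply: filterS => m cells_neq.
rewrite -[leLHS](big_map (unif_cell m) xpredT (incr m)); apply: ler_sum_uniq_ord.
- by move=> i; apply: sqr_ge0.
- rewrite map_inj_in_uniq // => x y xs ys; apply: contra_eq; exact: cells_neq.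
- by move=> i /mapP[x xs ->]; have [] := unif_cell_itv m x (sT x xs).
Qed.
End uniform_partition.

Section mid_derivative.
Context {R : realType}.

Lemma derive1_lipschitz_ball (f : R -> R) (K r : R) :
  (forall y, derivable f y 1) -> (forall y, `|y| <= r -> `|derive1 f y| <= K) ->
  K.-lipschitz_[set y | `|y| <= r] f.
Proof.
move=> df f'K.
have cf : continuous f.
  by move=> y; apply/differentiable_continuous/derivable1_diffP.
have mvt u v : u <= v -> `|u| <= r -> `|v| <= r -> `|f v - f u| <= K * `|v - u|.
  move=> uv hu hv.
  have [c /[!in_itv] /= /andP[uc cv] ->] :=
    MVT_segment uv (fun x _ => derivableP (df x)) (continuous_subspaceT cf).
  rewrite normrM ler_wpM2r // -derive1E; apply: f'K.
  move: hu hv; rewrite !ler_norml => /andP[ru ur] /andP[rv vr].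
  by rewrite (le_trans ru uc) (le_trans cv vr).
move=> [u v] [/= hu hv].
have [uv|vu] := leP u v; first by rewrite distrC [`|u - v|]distrC mvt.
exact: mvt (ltW vu) _ _.
Qed.

Lemma derive1_mid (a b : R -> R) y : derivable a y 1 -> derivable b y 1 ->
  derive1 (fun z => (a z + b z) / 2) y = (derive1 a y + derive1 b y) / 2.
Proof.
move=> da db.
have -> : (fun z => (a z + b z) / 2) = (2^-1 : R) \*: (a + b).
  by apply/funext => z /=; rewrite mulrC.
rewrite !derive1E deriveZ; last exact: derivableD.
by rewrite deriveD // mulrC.
Qed.

Lemma derivable_mid (a b : R -> R) y : derivable a y 1 -> derivable b y 1 ->
  derivable (fun z => (a z + b z) / 2) y 1.
Proof.
move=> da db; have -> : (fun z => (a z + b z) / 2) = (2^-1 : R) \*: (a + b).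
  by apply/funext => z /=; rewrite mulrC.
exact/derivableZ/derivableD.
Qed.

Lemma mid_derive1_lipschitz {a b : R -> R} {Ka Kb r : R} :
  (forall y, derivable a y 1) -> (forall y, derivable b y 1) ->
  (forall y, derivable (derive1 a) y 1) -> (forall y, derivable (derive1 b) y 1) ->
  (forall y, `|y| <= r -> `|derive1 (derive1 a) y| <= Ka) ->
  (forall y, `|y| <= r -> `|derive1 (derive1 b) y| <= Kb) ->
  ((Ka + Kb) / 2).-lipschitz_[set y | `|y| <= r]
    (derive1 (fun z => (a z + b z) / 2)).
Proof.
move=> da db dda ddb a''K b''K.
have -> : derive1 (fun z => (a z + b z) / 2) =
    (fun z => (derive1 a z + derive1 b z) / 2).
  by apply/funext => y; rewrite derive1_mid.
apply: (@derive1_lipschitz_ball (fun z => (derive1 a z + derive1 b z) / 2)).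
  by move=> y; apply: derivable_mid.
move=> y hy.
rewrite derive1_mid // normf_div [`|2|]ger0_norm // ler_pM2r ?invr_gt0 //.
exact: le_trans (ler_normD _ _) (lerD (a''K y hy) (b''K y hy)).
Qed.
End mid_derivative.

Section right_jumps.
Context {R : realType}.

Lemma rjump_unif_cvg (fn : nat -> R -> R) (f : R -> R) (T : R) :
  caglad_on T f -> (forall n, caglad_on T (fn n)) ->
  (forall e, 0 < e ->
     \forall n \near \oo, forall t, 0 <= t <= T -> `|fn n t - f t| <= e) ->
  forall e, 0 < e -> \forall n \near \oo, forall x, 0 <= x < T ->
    `|rjump (fn n) x - rjump f x| <= e.
Proof.
move=> [_ f_right] fn_caglad fn_unif e e0.
apply: filterS (fn_unif _ (divr_gt0 e0 (ltr0Sn _ 1))) => n fn_close x.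
move=> /[dup] xT /andP[x0 xT'].
have lim_close : `|lim (fn n @ x^'+) - lim (f @ x^'+)| <= e / 2.
  apply: (ler_cvg_to (cvg_norm (cvgB ((fn_caglad n).2 x xT) (f_right x xT)))
    (cvg_cst (e / 2))).
  rewrite near_withinE; apply/nbhs_ballP; exists (T - x) => [|t].
    by rewrite /= subr_gt0.
  rewrite /ball /= ltr_norml => /andP[t1 t2] xt.
  by apply: fn_close; apply/andP; split; lra.
rewrite /rjump subrACA; apply: le_trans (ler_normB _ _) _.
by rewrite [leRHS](splitr e) lerD // fn_close // x0 ltW.
Qed.
End right_jumps.

Section almost_sure_bounds.
Context {R : realType} {d : measure_display} {Omega : measurableType d}.
Variables (P : probability Omega R) (F : R -> set (set Omega)) (T : R).

Lemma stopping_time_cst (c : R) :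
  filtration F T -> 0 <= c -> stopping_time F T (fun _ : Omega => c).
Proof.
move=> [F_sigma _] c0; split=> // t /F_sigma[[F0 FC _] _].
have [ct|ct] := leP c t.
  rewrite (_ : [set _ | true] = setT `\` set0); first exact: FC.
  by apply/seteqP; split=> w //= _; split.
by rewrite (_ : [set _ | false] = set0) //; apply/seteqP; split=> w //=.
Qed.

Lemma unif_partitions_to_id : usual_conditions P F T -> 0 < T ->
  partitions_to_id P F T T (fun m i (_ : Omega) => unif_part T m i).
Proof.
move=> [fF _] T0; split.
- move=> m; split; [|split; [|split; [|split]]] => [i|w|i w|i w|w].
  + exact/stopping_time_cst/unif_part_ge0.
  + exact: unif_part0.
  + exact: unif_part_le_succ.
  + exact: unif_part_le.
  + by exists m.+1; rewrite unif_part_end.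
- apply: aeW => w e e0.
  apply: filterS (cvgr_lt 0 (unif_mesh_cvg0 T) _ e0) => m mesh_lt i.
  exact: le_trans (unif_part_mesh _ T0 m i) (ltW mesh_lt).
Qed.

Lemma ae_qv_unif_part {Zn Qn : nat -> R -> Omega -> R} :
  usual_conditions P F T -> 0 < T -> (forall n, is_qv P F T (Zn n) (Qn n)) ->
  {ae P, forall w n, (fun m => \sum_(i < m.+1)
     (Zn n (unif_part T m i.+1) w - Zn n (unif_part T m i) w) ^+ 2) @ \oo -->
     Qn n T w}.
Proof.
move=> uc T0 qv; apply: ae_foralln => n.
have hT : 0 <= T <= T by rewrite lexx ltW.
apply: filterS (qv n T hT _ (unif_partitions_to_id uc T0)) => w.
by rewrite -(funext (fun m => qv_sum_unif_part _ T0 (Zn n) m w)).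
Qed.

Lemma ae_locally_bounded_in_t {G : R -> R -> Omega -> R} :
  locally_bounded_in_t P F T G ->
  {ae P, forall w (r : nat), exists K, forall t y, 0 <= t <= T ->
     `|y| <= r%:R -> `|G t y w| <= K}.
Proof.
move=> lbG; apply: ae_foralln => r.
have [tau [[_ [_ tau_oo]] [C GC]]] := lbG r.+1%:R (ltr0Sn _ _).
apply: filterS tau_oo => w /(_ (T + 1)) [k Tk].
exists (C k) => t y /[dup] tT /andP[t0 t_le] yr.
have t_tau : t < tau k w.
  by rewrite (le_lt_trans t_le) // (lt_le_trans _ Tk) // ltrDl.
rewrite -(min_l (ltW t_tau)) GC ?(le_lt_trans t0) //.
by rewrite (le_trans yr) // ler_nat.
Qed.

Lemma ae_mid_lipschitz {A B : R -> R -> Omega -> R} : 0 <= T ->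
  price_surface P F T A -> price_surface P F T B ->
  {ae P, forall w (r : nat), exists2 K, 0 <= K & forall t, 0 <= t <= T ->
     K.-lipschitz_[set y | `|y| <= r%:R] (fun y => Mp A B t y w)}.
Proof.
move=> T0 [_ [_ [dA [_ [_ [_ [_ [_ lbA]]]]]]]] [_ [_ [dB [_ [_ [_ [_ [_ lbB]]]]]]]].
apply: filterS2 (ae_locally_bounded_in_t lbA) (ae_locally_bounded_in_t lbB).
move=> w bA bB r; have [KA HA] := bA r; have [KB HB] := bB r.
have T00 : 0 <= (0 : R) <= T by rewrite lexx T0.
have r00 : `|0 : R| <= r%:R by rewrite normr0.
exists ((KA + KB) / 2).
  by rewrite divr_ge0 // addr_ge0 // (le_trans (normr_ge0 _) (HA _ _ T00 r00),
    le_trans (normr_ge0 _) (HB _ _ T00 r00)).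
move=> t tT; have [dA1 [dA2 _]] := dA t w tT; have [dB1 [dB2 _]] := dB t w tT.
exact: mid_derive1_lipschitz dA1 dB1 dA2 dB2 (HA t ^~ tT) (HB t ^~ tT).
Qed.
End almost_sure_bounds.

Theorem lemma8 (R : realType) (d : measure_display) (Omega : measurableType d)
  (P : probability Omega R) (F : R -> set (set Omega)) (T : R)
  (A B : R -> R -> Omega -> R)
  (Zn : nat -> R -> Omega -> R) (Z : R -> Omega -> R)
  (Qn : nat -> R -> Omega -> R) :
  0 < T ->
  usual_conditions P F T ->
  price_surface P F T A -> price_surface P F T B ->
  (forall n, caglad_predictable F T (Zn n)) ->
  (forall n, is_qv P F T (Zn n) (Qn n)) ->
  caglad_predictable F T Z -> bounded_qv P F T Z ->
  {ae P, forall w, forall e : R, 0 < e ->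
     \forall n \near \oo, forall t, 0 <= t <= T -> `|Zn n t w - Z t w| <= e} ->
  {ae P, forall w, exists C : R, forall n, Qn n T w <= C} ->
  {ae P, forall w, (fun n => BZ A B T (Zn n) w) @ \oo --> BZ A B T Z w}.
Proof.
move=> T0 uc psA psB Zn_cp qv_n Z_cp _ Zn_unif Qn_bd.
have qv_unif := ae_qv_unif_part P F T uc T0 qv_n.
have lipM := ae_mid_lipschitz P F T (ltW T0) psA psB.
near=> w.
have /(_ _)[//|C CQ] := near Qn_bd w.
have [r Cr] : exists r : nat, C <= r%:R ^+ 2.
  exists (Num.truncn `|C|).+1; apply: le_trans (ler_norm C) (ltW _).
  by apply: lt_le_trans (truncnS_gt _) _; rewrite expr2 ler_peMr // ler1n.
have /(_ _ r)[//|K K0 lipK] := near lipM w.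
apply: (cvg_sumR_jump_cost (phi := fun s y => Mp A B s y w)
  (jn := fun n => rjump (Zn n ^~ w)) (j := rjump (Z ^~ w)) K0 (ler0n _ r) Cr).
- by move=> x /andP[x0 xT]; apply: lipK; rewrite x0 ltW.
- move=> n s us sT; apply: le_trans (CQ n).
  apply: (finsums_sqr_rjump_le T T0 ((Zn_cp n).1 w)) _ s us sT.
  by apply: (near qv_unif w).
- apply: rjump_unif_cvg (Z_cp.1 w) (fun n => (Zn_cp n).1 w) _.
  by apply: (near Zn_unif w).
Unshelve. all: by end_near.
Qed.
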